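(* Let $G$ be a connected chain graph with minimum degree $\delta(G)\ge 3$. Then $px_3(G)\le 3$. Moreover, the bound is tight: let $s\ge 4$ and $t\ge 2\cdot 2^3+4=20$, and let $G$ be the bipartite graph with parts $U=\{u_1,\dots,u_s\}$, $V=\{v_1,\dots,v_t\}$ where $N(u_1)=\dots=N(u_{s-3})=\{v_1,v_2,v_3\}$ and $N(u_{s-2})=N(u_{s-1})=N(u_s)=V$; then $px_3(G)=3$.
   Context: All graphs are finite, simple and undirected; $N(v)$ is the neighborhood of $v$. A bipartite graph $G$ with parts $U,V$ is a chain graph if $U$ can be ordered $u_1,\dots,u_s$ with $N(u_1)\subseteq N(u_2)\subseteq\cdots\subseteq N(u_s)$. An edge-coloring assigns colors to edges, adjacent edges being allowed to share a color. A tree in an edge-colored graph is proper if no two adjacent edges of it receive the same color. An edge-coloring of $G$ is a $3$-proper coloring if for every $3$-element set $S\subseteq V(G)$ there is a proper tree in $G$ containing all vertices of $S$; $px_3(G)$ is the minimum number of colors in a $3$-proper coloring of $G$. *)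

From mathcomp Require Import all_boot.
Set Implicit Arguments. Unset Strict Implicit. Unset Printing Implicit Defensive.

Definition simple_graph (T : finType) (e : rel T) : Prop :=
  symmetric e /\ irreflexive e.

Definition nbhd (T : finType) (e : rel T) (v : T) : {set T} := [set w | e v w].

Definition connected_graph (T : finType) (e : rel T) : Prop :=
  forall x y : T, connect e x y.

Definition min_degree_ge (T : finType) (e : rel T) (d : nat) : Prop :=
  forall v : T, d <= #|nbhd e v|.

Definition is_edge (T : finType) (e : rel T) (f : {set T}) : bool :=
  [exists x, exists y, (f == [set x; y]) && e x y].

Definition chain_graph (T : finType) (e : rel T) : Prop :=
  exists (U V : {set T}),
    [/\ [disjoint U & V], U :|: V = [set: T],
        (forall x y, e x y -> (x \in U) && (y \in V) || (x \in V) && (y \in U)) &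
        exists s : seq T, [/\ uniq s, (forall x, (x \in s) = (x \in U)) &
          sorted (fun a b => nbhd e a \subset nbhd e b) s]].

Definition edge_coloring (T : finType) (k : nat) := {set T} -> 'I_k.

(* A tree in G, given by its vertex set VT and edge set F: F consists of
   edges of G with both ends in VT, (VT, F) is connected, and |F| = |VT| - 1
   (a connected graph with |V|-1 edges is a tree). *)
Definition is_tree (T : finType) (e : rel T) (VT : {set T}) (F : {set {set T}}) : Prop :=
  [/\ VT != set0,
      (forall f, f \in F -> is_edge e f && (f \subset VT)),
      (forall x y, x \in VT -> y \in VT ->
          connect (fun a b => [set a; b] \in F) x y) &
      #|F| + 1 = #|VT| ].

Definition proper_edges (T : finType) (k : nat) (c : edge_coloring T k)
  (F : {set {set T}}) : Prop :=
  forall f1 f2, f1 \in F -> f2 \in F -> f1 != f2 -> f1 :&: f2 != set0 ->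
    c f1 != c f2.

Definition three_proper (T : finType) (e : rel T) (k : nat) (c : edge_coloring T k) : Prop :=
  forall S : {set T}, #|S| = 3 ->
    exists (VT : {set T}) (F : {set {set T}}),
      [/\ is_tree e VT F, proper_edges c F & S \subset VT].

Definition px3_le (T : finType) (e : rel T) (k : nat) : Prop :=
  exists c : edge_coloring T k, three_proper e c.

Definition px3_eq (T : finType) (e : rel T) (k : nat) : Prop :=
  px3_le e k /\ forall j, j < k -> ~ px3_le e j.

(* The tightness example: U = inl 'I_s (u_1..u_s as indices 0..s-1),
   V = inr 'I_t (v_1..v_t as 0..t-1); u_i for i < s-3 adjacent to v_1,v_2,v_3,
   the last three u's adjacent to all of V. *)
Definition ex_adj (s t : nat) (x y : 'I_s + 'I_t) : bool :=
  match x, y with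
  | inl i, inr j | inr j, inl i => (s - 3 <= i) || (j < 3)
  | _, _ => false
  end.
Arguments ex_adj : clear implicits.

From mathcomp Require Import all_boot zify.
Set Implicit Arguments. Unset Strict Implicit. Unset Printing Implicit Defensive.

(* Let a_0, a_1, a_2 be neighbours of u_1, the first vertex in the
   chain order, and b_0, b_1, b_2 the last three vertices u_(s-2), u_(s-1), u_s.
   Every u_i is adjacent to all the a_k since N(u_1) is contained in N(u_i); the
   neighbours of a vertex of V form a final segment of the chain order, so by the
   degree condition every vertex of V is adjacent to all the b_k. Colour b_i a_j with
   the colour different from i and j, and any other edge at a_k or b_k with k.
   For three vertices x_0, x_1, x_2, the path b_0 a_1 b_2 a_0 b_1 a_2 together with
   an edge from each x_k off the path to a_k or b_k is a properly coloured tree: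
   no path edge at a_k or b_k has colour k.

   A properly coloured tree with one colour has at most two vertices. A
   properly 2-coloured tree has maximum degree 2, so at least 2|S| - 2 of its edge
   ends lie in any vertex set S. In the example, by pigeonhole three of v_4, ..., v_t
   see their only neighbours u_(s-2), u_(s-1), u_s in the same colours; each of those
   three can then be joined in the tree to only one of them: 3 edge ends instead of 4. *)

Lemma set2_eqE (T : finType) (a b x y : T) : x != y ->
  ([set a; b] == [set x; y]) = ((a, b) == (x, y)) || ((a, b) == (y, x)).
Proof.
move=> nxy; apply/idP/idP; last first.
  by case/orP => /eqP [-> ->]; rewrite // setUC.
move/eqP=> E.
have ha : a \in [set x; y] by rewrite -E set21.
have hb : b \in [set x; y] by rewrite -E set22.
have hx : x \in [set a; b] by rewrite E set21.
have hy : y \in [set a; b] by rewrite E set22.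
move: ha hb hx hy; rewrite !in_set2 !xpair_eqE.
by case/orP=> /eqP ->; case/orP=> /eqP ->; rewrite ?eqxx ?orbT //=;
  move: nxy; rewrite eq_sym; case: eqP.
Qed.

Lemma sum_nat_bool (T : finType) (A : {pred T}) (P : pred T) :
  \sum_(x in A) (P x : nat) = #|[set x in A | P x]|.
Proof.
rewrite -sum1_card [RHS](eq_bigl (fun x => (x \in A) && P x)); last by move=> x; rewrite inE.
by rewrite big_mkcondr; apply: eq_bigr => x _; case: (P x).
Qed.

Lemma card_geq_subset (T : finType) (A : {set T}) n :
  n <= #|A| -> exists2 S : {set T}, S \subset A & #|S| = n.
Proof.
case/card_geqP => s [uniq_s <- sA]; exists [set x in s].
  by apply/subsetP => x; rewrite inE; apply: sA.
by rewrite cardsE (card_uniqP uniq_s).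
Qed.

Lemma pigeonhole_fiber (aT rT : finType) (f : aT -> rT) (A : {set aT}) n :
  #|rT| * n < #|A| -> exists y, n < #|[set x in A | f x == y]|.
Proof.
move=> ltA; apply/existsP; apply: contraLR ltA; rewrite negb_exists -leqNgt.
move/forallP => small; rewrite -sum1_card (partition_big f predT) //=.
rewrite -sum_nat_const; apply: leq_sum => y _.
have := small y; rewrite -leqNgt; apply: leq_trans; rewrite -sum1_card.
by apply/eq_leq/eq_bigl => x; rewrite !inE.
Qed.

Section Degree.
Variable T : finType.
Implicit Types (F : {set {set T}}) (v w : T).

Definition deg F v := #|[set u | [set v; u] \in F]|.

Definition pair_edges F := forall f, f \in F -> exists x y, x != y /\ f = [set x; y].

Lemma deg_sum_bool F v : deg F v = \sum_u ([set v; u] \in F : nat).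
Proof. by rewrite sum_nat_bool; apply: eq_card => u; rewrite !inE. Qed.

Lemma handshake F : pair_edges F -> \sum_v deg F v = 2 * #|F|.
Proof.
move=> pF; under eq_bigr => v _ do rewrite deg_sum_bool.
rewrite pair_big /= -[LHS]big_mkcond /=.
rewrite (partition_big (fun p : T * T => [set p.1; p.2]) (mem F)) //= mulnC.
rewrite -sum_nat_const; apply: eq_bigr => f fF.
have [x [y [nxy Ef]]] := pF f fF; rewrite Ef in fF *.
rewrite (eq_bigl (mem [set (x, y); (y, x)])); last first.
  move=> p; rewrite !inE -set2_eqE //.
  by case E: ([set p.1; p.2] == _); rewrite ?andbF // andbT (eqP E).
by rewrite sum1_card cards2 xpair_eqE negb_and nxy.
Qed.

Lemma pair_edges_neq F v u : pair_edges F -> [set v; u] \in F -> u != v.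
Proof.
move=> pF /pF [x [y [nxy E]]]; apply/eqP => uv; have := cards2 x y.
by rewrite -E uv setUid cards1 nxy.
Qed.

Lemma proper_star_inj k (c : edge_coloring T k) F w v1 v2 :
  pair_edges F -> proper_edges c F -> [set w; v1] \in F -> [set w; v2] \in F ->
  c [set w; v1] = c [set w; v2] -> v1 = v2.
Proof.
move=> pF pr e1 e2 ec; apply/eqP; apply: contraT => n12.
have := pr _ _ e1 e2; rewrite ec eqxx; apply.
  apply/negP => /eqP E; have : v1 \in [set w; v2] by rewrite -E set22.
  by rewrite in_set2 (negbTE n12) orbF (negbTE (pair_edges_neq pF e1)).
by apply/set0Pn; exists w; rewrite !inE !eqxx.
Qed.

Lemma deg_proper_le k (c : edge_coloring T k) F v :
  pair_edges F -> proper_edges c F -> deg F v <= k.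
Proof.
move=> pF pr; have := @leq_card_in _ _ (fun u => c [set v; u]) [set u | [set v; u] \in F].
rewrite card_ord; apply=> u1 u2; rewrite !inE => e1 e2; exact: proper_star_inj pF pr e1 e2.
Qed.

End Degree.

Section ProperTree.
Variables (T : finType) (e : rel T) (VT : {set T}) (F : {set {set T}}).
Hypotheses (irr_e : irreflexive e) (sym_e : symmetric e) (tree : is_tree e VT F).

Lemma tree_pair_edges : pair_edges F.
Proof.
case: tree => _ edgeF _ _ f /edgeF /andP [].
case/existsP => x /existsP [y /andP [/eqP -> exy]] _.
by exists x, y; split => //; apply: contraTneq exy => ->; rewrite irr_e.
Qed.

Lemma tree_edge_adj v u : [set v; u] \in F -> e v u.
Proof.
case: tree => _ edgeF _ _ /edgeF /andP [].
case/existsP => x /existsP [y /andP [E exy]] _.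
have nxy : x != y by apply: contraTneq exy => ->; rewrite irr_e.
by move: E; rewrite set2_eqE // => /orP [] /eqP [-> ->]; rewrite // sym_e.
Qed.

Lemma tree_deg_out v : v \notin VT -> deg F v = 0.
Proof.
case: tree => _ edgeF _ _ vVT; apply/eqP; rewrite cards_eq0; apply/eqP/setP => u.
rewrite !inE; apply/negP => /edgeF /andP [_ /subsetP /(_ v)].
by rewrite set21 => /(_ isT); apply/negP.
Qed.

(* By handshaking the degrees in a tree sum to 2 * #|VT| - 2. *)
Lemma tree_sum_deg_bound d (S : {set T}) :
  (forall v, v \in VT -> deg F v <= d) -> S \subset VT ->
  2 * #|VT| <= \sum_(v in S) deg F v + d * #|VT :\: S| + 2.
Proof.
move=> deg_le sSVT.
have deg_out_S : \sum_(v | v \notin S) deg F v <= d * #|VT :\: S|.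
  rewrite mulnC -sum_nat_const big_mkcond [X in _ <= X]big_mkcond /=.
  apply: leq_sum => v _; rewrite in_setD; case: (v \in S) => //=.
  by case: ifP => [/deg_le //|/negbT/tree_deg_out ->].
case: (tree) => _ _ _ cardF.
have := handshake tree_pair_edges; rewrite (bigID (mem S)) /= => E.
by rewrite -cardF mulnDr muln1 -E leq_add2r leq_add2l.
Qed.

Lemma proper_tree_card_le2 k (c : edge_coloring T k) :
  k <= 1 -> proper_edges c F -> #|VT| <= 2.
Proof.
move=> k1 pr; have deg_le v (_ : v \in VT) := deg_proper_le v tree_pair_edges pr.
have := tree_sum_deg_bound deg_le (sub0set VT).
rewrite big_set0 setD0; nia.
Qed.

(* Each hub in W is joined in the tree to at most one vertex of S, so the degrees
   over S sum to at most #|W|; with maximum degree 2 they sum to at least 2 * #|S| - 2. *)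
Lemma proper2_tree_hub_bound k (c : edge_coloring T k) (S W : {set T}) :
  k <= 2 -> proper_edges c F -> S \subset VT ->
  (forall v u, v \in S -> e v u -> u \in W) ->
  (forall v1 v2 w, v1 \in S -> v2 \in S -> w \in W -> c [set w; v1] = c [set w; v2]) ->
  2 * #|S| <= #|W| + 2.
Proof.
move=> k2 pr sSVT nbW colW.
have hub_once w : \sum_(v in S) ([set v; w] \in F : nat) <= (w \in W).
  rewrite sum_nat_bool; case: (boolP (w \in W)) => wW.
    apply/card_le1_eqP => v1 v2; rewrite !inE => /andP [v1S e1] /andP [v2S e2].
    rewrite setUC in e1; rewrite setUC in e2.
    exact: proper_star_inj tree_pair_edges pr e2 e1 (colW _ _ _ v2S v1S wW).
  rewrite leqn0 cards_eq0; apply/eqP/setP => v; rewrite !inE.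
  by apply: contraNF wW => /andP [vS /tree_edge_adj]; apply: nbW.
have degS : \sum_(v in S) deg F v <= #|W|.
  under eq_bigr => v _ do rewrite deg_sum_bool.
  rewrite exchange_big /= -sum1_card [X in _ <= X]big_mkcond /=.
  by apply: leq_sum => w _; apply: leq_trans (hub_once w) _; case: (w \in W).
have deg_le v (_ : v \in VT) := leq_trans (deg_proper_le v tree_pair_edges pr) k2.
have := tree_sum_deg_bound deg_le sSVT; have := subset_leq_card sSVT.
rewrite cardsD (setIidPr sSVT); lia.
Qed.

End ProperTree.

Definition o0 : 'I_3 := @Ordinal 3 0 isT.
Definition o1 : 'I_3 := @Ordinal 3 1 isT.
Definition o2 : 'I_3 := @Ordinal 3 2 isT.

Lemma ord3P (i : 'I_3) : [\/ i = o0, i = o1 | i = o2].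
Proof.
by case: i => [[|[|[|n]]] Hi] //; [constructor 1|constructor 2|constructor 3]; apply: val_inj.
Qed.

Definition third (i j : 'I_3) : 'I_3 := Ordinal (ltn_pmod (6 - i - j) (isT : 0 < 3)).

Lemma third_neq i j : i != j -> (third i j != i) && (third i j != j).
Proof. by case: (ord3P i) => ->; case: (ord3P j) => ->. Qed.

(* The pairs (i, j) of the edges b_i a_j of the Hamiltonian path
   b_0 a_1 b_2 a_0 b_1 a_2 of the complete bipartite graph on {b_i} and {a_j}. *)
Definition core_path : seq ('I_3 * 'I_3) :=
  [:: (o0, o1); (o2, o1); (o2, o0); (o1, o0); (o1, o2)].

Lemma core_path_proper : all (fun p => all (fun q => [|| p == q,
  third p.1 p.2 != third q.1 q.2 | (p.1 != q.1) && (p.2 != q.2)]) core_path) core_path.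
Proof. by []. Qed.

Lemma pick_eq1 (I : finType) (P : pred I) i :
  (forall j, P j = (j == i)) -> [pick j | P j] = Some i.
Proof. by move=> PE; case: pickP => [j|/(_ i)]; rewrite PE ?eqxx // => /eqP ->. Qed.

Lemma pick_eq0 (I : finType) (P : pred I) :
  (forall j, P j = false) -> [pick j | P j] = None.
Proof. by move=> PE; case: pickP => // j; rewrite PE. Qed.

Section HubColoring.
Variables (T : finType) (e : rel T) (a b : 'I_3 -> T).
Hypotheses (irr_e : irreflexive e) (inj_a : injective a) (inj_b : injective b)
  (hubs : forall v, (forall k, e v (a k)) \/ (forall k, e v (b k))).

Lemma adj_ba i j : e (b i) (a j).
Proof. by case: (hubs (b i)) => // /(_ i); rewrite irr_e. Qed.

Lemma eq_ba i j : (b i == a j) = false.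
Proof. by apply: contraTF (adj_ba i j) => /eqP ->; rewrite irr_e. Qed.

Definition hub_col (f : {set T}) : 'I_3 :=
  match [pick i | b i \in f], [pick j | a j \in f] with
  | Some i, Some j => third i j
  | Some i, None => i
  | None, Some j => j
  | None, None => o0
  end.

Definition core : {set T} := [set a i | i in 'I_3] :|: [set b i | i in 'I_3].

Lemma core_a i : a i \in core. Proof. by rewrite inE imset_f. Qed.
Lemma core_b i : b i \in core. Proof. by rewrite inE orbC imset_f. Qed.

Lemma eq_a_notin_core y i : y \notin core -> (a i == y) = false.
Proof. by apply: contraNF => /eqP <-; apply: core_a. Qed.
Lemma eq_b_notin_core y i : y \notin core -> (b i == y) = false.
Proof. by apply: contraNF => /eqP <-; apply: core_b. Qed.

Lemma hub_col_ba i j : hub_col [set b i; a j] = third i j.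
Proof.
rewrite /hub_col (@pick_eq1 _ _ i) ?(@pick_eq1 _ _ j) // => k; rewrite in_set2.
  by rewrite (inj_eq inj_a) eq_sym eq_ba.
by rewrite (inj_eq inj_b) eq_ba orbF.
Qed.

Lemma hub_col_leaf_a y k : y \notin core -> hub_col [set y; a k] = k.
Proof.
move=> ny; rewrite /hub_col pick_eq0 ?(@pick_eq1 _ _ k) // => j; rewrite in_set2.
  by rewrite eq_a_notin_core // (inj_eq inj_a).
by rewrite eq_b_notin_core // eq_ba.
Qed.

Lemma hub_col_leaf_b y k : y \notin core -> hub_col [set y; b k] = k.
Proof.
move=> ny; rewrite /hub_col (@pick_eq1 _ _ k) ?pick_eq0 // => j; rewrite in_set2.
  by rewrite eq_a_notin_core // eq_sym eq_ba.
by rewrite eq_b_notin_core // (inj_eq inj_b).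
Qed.

Lemma card_core : #|core| = 6.
Proof.
have : [disjoint [set a i | i in 'I_3] & [set b i | i in 'I_3]].
  apply/pred0P => v /=; apply/negP => /andP [/imsetP [i _ ->] /imsetP [j _ /eqP]].
  by rewrite eq_sym eq_ba.
by rewrite -(leq_card_setU _ _).2 !card_imset ?card_ord // => /eqP.
Qed.

Definition core_edges : {set {set T}} := [set [set b p.1; a p.2] | p in core_path].

Lemma card_core_edges : #|core_edges| = 5.
Proof.
rewrite card_in_imset; first exact: (card_uniqP (isT : uniq core_path)).
move=> [i j] [i' j'] _ _ /= E.
have : b i \in [set b i'; a j'] by rewrite -E set21.
have : a j \in [set b i'; a j'] by rewrite -E set22.
rewrite !in_set2 (inj_eq inj_a) (inj_eq inj_b) eq_ba orbF eq_sym eq_ba /=.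
by move=> /eqP -> /eqP ->.
Qed.

Lemma core_edges_sub f : f \in core_edges -> f \subset core.
Proof.
case/imsetP => p _ ->; apply/subsetP => v /set2P [] ->; by rewrite ?core_a ?core_b.
Qed.

Lemma core_edges_proper : proper_edges hub_col core_edges.
Proof.
move=> _ _ /imsetP [p pP ->] /imsetP [q qP ->] pq /set0Pn [v].
rewrite !hub_col_ba; have /allP /(_ p pP) /allP /(_ q qP) := core_path_proper.
case/or3P => [/eqP eqpq|//|/andP [d1 d2]]; first by rewrite eqpq eqxx in pq.
rewrite in_setI !in_set2 => /andP [vp vq].
case/orP: vp vq => /eqP -> /orP [] /eqP.
- by move/inj_b => E; rewrite E eqxx in d1.
- by move/eqP; rewrite eq_ba.
- by move/eqP; rewrite eq_sym eq_ba.
- by move/inj_a => E; rewrite E eqxx in d2.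
Qed.

Section Leaves.
Variable x : 'I_3 -> T.
Hypothesis inj_x : injective x.

Definition leaves : {set 'I_3} := [set k | x k \notin core].
Definition hub k := if e (x k) (a k) then a k else b k.
Definition leaf_edges : {set {set T}} := [set [set x k; hub k] | k in leaves].
Definition tree_vertices : {set T} := core :|: [set x k | k in leaves].
Definition tree_edges : {set {set T}} := core_edges :|: leaf_edges.

Lemma hub_core k : hub k \in core.
Proof. by rewrite /hub; case: ifP; rewrite ?core_a ?core_b. Qed.

Lemma adj_hub k : e (x k) (hub k).
Proof. by rewrite /hub; case: ifP => // xa; case: (hubs (x k)) => // /(_ k); rewrite xa. Qed.

Lemma hub_col_leaf k : k \in leaves -> hub_col [set x k; hub k] = k.
Proof.
by rewrite inE /hub => xk; case: ifP; rewrite ?hub_col_leaf_a ?hub_col_leaf_b.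
Qed.

Lemma card_leaf_edges : #|leaf_edges| = #|leaves|.
Proof.
rewrite card_in_imset // => k m kL mL E.
have : x k \in [set x m; hub m] by rewrite -E set21.
by case/set2P => [/inj_x //|xkh]; move: kL; rewrite inE xkh hub_core.
Qed.

Lemma card_tree_edges : #|tree_edges| = 5 + #|leaves|.
Proof.
have : [disjoint core_edges & leaf_edges].
  apply/pred0P => f /=; apply/negP => /andP [/core_edges_sub /subsetP sf].
  by case/imsetP => k; rewrite inE => /negP xk fE; apply: xk; rewrite sf // fE set21.
by rewrite -(leq_card_setU _ _).2 card_core_edges card_leaf_edges => /eqP.
Qed.

Lemma card_tree_vertices : #|tree_vertices| = 6 + #|leaves|.
Proof.
have : [disjoint core & [set x k | k in leaves]].
  apply/pred0P => v /=; apply/negP => /andP [vc /imsetP [k]].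
  by rewrite inE => xk vx; move: xk; rewrite -vx vc.
by rewrite -(leq_card_setU _ _).2 card_core card_in_imset => [/eqP|? ? _ _ /inj_x].
Qed.

Lemma core_path_connected v : v \in core ->
  connect (fun u w => [set u; w] \in tree_edges) (b o0) v.
Proof.
set R := fun u w => _.
have R_ba i j : (i, j) \in core_path -> R (b i) (a j).
  move=> ij; rewrite /R inE; apply/orP; left.
  exact: (imset_f (fun p => [set b p.1; a p.2]) ij).
have R_ab i j : (i, j) \in core_path -> R (a j) (b i) by rewrite /R setUC; apply: R_ba.
have walk : path R (b o0) [:: a o1; b o2; a o0; b o1; a o2].
  by rewrite /= R_ba ?R_ab ?R_ba ?R_ab ?R_ba.
move=> /setUP [] /imsetP [i _ ->]; apply: (path_connect walk);
  by case: (ord3P i) => ->; rewrite !inE eqxx ?orbT.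
Qed.

Lemma hub_tree : is_tree e tree_vertices tree_edges.
Proof.
split.
- by apply/set0Pn; exists (b o0); rewrite inE core_b.
- move=> f; rewrite inE => /orP [fc|/imsetP [k kL ->]].
    rewrite (subset_trans (core_edges_sub fc)) ?subsetUl // andbT.
    case/imsetP: fc => p _ ->; apply/existsP; exists (b p.1); apply/existsP.
    by exists (a p.2); rewrite eqxx adj_ba.
  apply/andP; split.
    by apply/existsP; exists (x k); apply/existsP; exists (hub k); rewrite eqxx adj_hub.
  by apply/subsetP => v /set2P [] ->; rewrite inE ?hub_core // imset_f ?orbT.
- have conn v : v \in tree_vertices ->
      connect (fun u w => [set u; w] \in tree_edges) (b o0) v.
    case/setUP => [/core_path_connected //|/imsetP [k kL ->]].
    apply: connect_trans (core_path_connected (hub_core k)) (connect1 _).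
    by rewrite setUC inE (imset_f (fun k => [set x k; hub k]) kL) orbT.
  move=> u v /conn uV /conn vV; apply: connect_trans vV.
  have sym_R : symmetric (fun u w => [set u; w] \in tree_edges) by move=> ? ?; rewrite setUC.
  by rewrite (sym_connect_sym sym_R).
- by rewrite card_tree_edges card_tree_vertices addnC.
Qed.

Lemma core_leaf_proper p m : p \in core_path -> m \in leaves ->
  [set b p.1; a p.2] :&: [set x m; hub m] != set0 ->
  hub_col [set b p.1; a p.2] != hub_col [set x m; hub m].
Proof.
move=> pP mL /set0Pn [v]; rewrite hub_col_ba hub_col_leaf //.
have p12 : p.1 != p.2 by apply: (allP (isT : all (fun q => q.1 != q.2) core_path)).
have /andP [ne1 ne2] := third_neq p12.
rewrite in_setI !in_set2 => /andP [vp /orP [/eqP vx|/eqP vh]].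
  by move: mL; rewrite inE -vx; case/orP: vp => /eqP ->; rewrite ?core_a ?core_b.
move: vh vp; rewrite /hub; case: ifP => _ ->.
  by rewrite (inj_eq inj_a) eq_sym eq_ba /= => /eqP ->.
by rewrite (inj_eq inj_b) eq_ba orbF => /eqP ->.
Qed.

Lemma tree_edges_proper : proper_edges hub_col tree_edges.
Proof.
move=> f1 f2; rewrite !inE => /orP [c1|/imsetP [k kL ->]] /orP [c2|/imsetP [m mL ->]].
- exact: core_edges_proper.
- by case/imsetP: c1 => p pP -> _; apply: core_leaf_proper.
- case/imsetP: c2 => p pP -> _ meet; rewrite eq_sym core_leaf_proper //.
  by rewrite setIC.
- by rewrite !hub_col_leaf // => ne _; apply: contra_neq ne => ->.
Qed.

End Leaves.
End HubColoring.

Lemma px3_le3_of_hubs (T : finType) (e : rel T) (a b : 'I_3 -> T) :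
  irreflexive e -> injective a -> injective b ->
  (forall v, (forall k, e v (a k)) \/ (forall k, e v (b k))) -> px3_le e 3.
Proof.
move=> irr_e inj_a inj_b hubs; exists (hub_col a b) => S cardS.
pose x (k : 'I_3) : T := enum_val (cast_ord (esym cardS) k).
have inj_x : injective x by move=> i j /enum_val_inj /cast_ord_inj.
exists (tree_vertices a b x), (tree_edges e a b x); split.
- exact: hub_tree.
- exact: tree_edges_proper.
apply/subsetP => v vS.
have -> : v = x (cast_ord cardS (enum_rank_in vS v)) by rewrite /x cast_ordK enum_rankK_in.
rewrite inE; case: (boolP (x _ \in core a b)) => //= xk.
by rewrite (imset_f x) // inE.
Qed.

Section ChainOrder.
Variables (T : finType) (e : rel T) (t0 : T) (s : seq T).
Hypotheses (sym_e : symmetric e)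
  (sorted_s : sorted (fun u w => nbhd e u \subset nbhd e w) s).

Lemma nbhd_nth_sub i j : i <= j -> j < size s ->
  nbhd e (nth t0 s i) \subset nbhd e (nth t0 s j).
Proof.
have sub_trans : transitive (fun u w => nbhd e u \subset nbhd e w).
  by move=> ? ? ?; apply: subset_trans.
move=> ij js; apply: (sorted_leq_nth sub_trans (fun u => subxx _) t0 sorted_s) => //.
by rewrite inE; lia.
Qed.

Lemma nbhd_head_sub u : u \in s -> nbhd e (nth t0 s 0) \subset nbhd e u.
Proof. by move=> us; rewrite -(nth_index t0 us) nbhd_nth_sub // index_mem. Qed.

Lemma adj_nth_last v k : {subset nbhd e v <= s} -> k < #|nbhd e v| ->
  e v (nth t0 s (size s - k.+1)).
Proof.
move=> nbs; apply: contraTT => nadj; rewrite -leqNgt.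
have := card_size [seq nth t0 s i | i <- iota (size s - k) k].
rewrite size_map size_iota; apply: leq_trans; apply/subset_leq_card/subsetP => u.
rewrite inE => vu; have us : u \in s by apply: nbs; rewrite inE.
rewrite -(nth_index t0 us); apply: map_f; rewrite mem_iota.
have ilt : index u s < size s by rewrite index_mem.
case: (leqP (index u s) (size s - k.+1)) => [ile|]; last by lia.
have /subsetP /(_ v) := nbhd_nth_sub ile (ltac:(lia) : size s - k.+1 < size s).
by rewrite !inE nth_index // !(sym_e _ v) vu (negbTE nadj) => /(_ isT).
Qed.

End ChainOrder.

Lemma chain_graph_hubs (T : finType) (e : rel T) (t0 : T) :
  simple_graph e -> chain_graph e -> min_degree_ge e 3 ->
  exists a b : 'I_3 -> T, [/\ injective a, injective b &
    forall v, (forall k, e v (a k)) \/ (forall k, e v (b k))].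
Proof.
move=> [sym_e _] [U [V [dUV covUV bip [s [uniq_s memU sorted_s]]]]] deg3.
have inUV v : (v \in U) || (v \in V) by rewrite -in_setU covUV inE.
have nbhdU v : v \in U -> {subset nbhd e v <= V}.
  by move=> vU u; rewrite inE => /bip; rewrite vU (disjointFr dUV vU) /= orbF.
have nbhdV v : v \in V -> {subset nbhd e v <= s}.
  by move=> vV u; rewrite inE memU => /bip; rewrite vV (disjointFl dUV vV) /=.
have [v0 v0V] : exists v, v \in V.
  case/orP: (inUV t0) => [t0U|]; last by exists t0.
  have /card_gt0P [v vt0] : 0 < #|nbhd e t0| by apply: leq_trans (deg3 t0).
  by exists v; apply: nbhdU vt0.
have size3 : 3 <= size s.
  rewrite -(card_uniqP uniq_s); apply: leq_trans (deg3 v0) (subset_leq_card _).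
  by apply/subsetP; apply: nbhdV.
pose a k := enum_val (widen_ord (deg3 (nth t0 s 0)) k).
pose b (k : 'I_3) := nth t0 s (size s - k.+1).
exists a, b; split.
- by move=> i j /enum_val_inj [] /val_inj.
- have lt_s (k : nat) : size s - k.+1 < size s by lia.
  move=> i j /eqP; rewrite nth_uniq ?lt_s // => /eqP ij.
  by apply: ord_inj; move: (ltn_ord i) (ltn_ord j); lia.
move=> v; case/orP: (inUV v) => [vU|vV]; [left|right] => k.
  have /subsetP := nbhd_head_sub t0 sorted_s (etrans (memU v) vU).
  by move/(_ (a k) (enum_valP _)); rewrite inE.
apply: adj_nth_last => //; first exact: nbhdV.
exact: leq_trans (ltn_ord k) (deg3 v).
Qed.

Section Example.
Variables s' t' : nat.

Local Notation G := (ex_adj (s' + 3) (3 + t')).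
Local Notation vertex := ('I_(s' + 3) + 'I_(3 + t'))%type.

Definition full_v (k : 'I_3) : vertex := inr (lshift t' k).
Definition full_u (k : 'I_3) : vertex := inl (rshift s' k).
Definition low_v (i : 'I_t') : vertex := inr (rshift 3 i).

Lemma ex_irr : irreflexive G. Proof. by case. Qed.
Lemma ex_sym : symmetric G. Proof. by move=> [i|j] [i'|j']. Qed.

Lemma full_v_inj : injective full_v.
Proof. by move=> i j [] E; apply: val_inj. Qed.
Lemma full_u_inj : injective full_u.
Proof. by move=> i j [] /addnI E; apply: val_inj. Qed.
Lemma low_v_inj : injective low_v.
Proof. by move=> i j [] /addnI E; apply: val_inj. Qed.

Lemma ex_hubs v : (forall k, G v (full_v k)) \/ (forall k, G v (full_u k)).
Proof.
case: v => [i|j]; [left|right] => k; rewrite /= ?ltn_ord ?orbT //.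
by rewrite addnK leq_addr.
Qed.

Lemma adj_low_v i u : G (low_v i) u -> u \in [set full_u k | k in 'I_3].
Proof.
case: u => [j|//] /=; rewrite addnK => /orP [hj|]; last by lia.
have hk : j - s' < 3 by move: (ltn_ord j); lia.
by apply/imsetP; exists (Ordinal hk) => //; congr inl; apply: val_inj => /=; lia.
Qed.

Lemma ex_px3_le3 : px3_le G 3.
Proof. exact: px3_le3_of_hubs ex_irr full_v_inj full_u_inj ex_hubs. Qed.

Lemma ex_not_px3_le1 j : j <= 1 -> ~ px3_le G j.
Proof.
move=> j1 [c proper3]; have cardS : #|[set full_u k | k in 'I_3]| = 3.
  by rewrite card_imset ?card_ord //; apply: full_u_inj.
have [VT [F [tree pr sSVT]]] := proper3 _ cardS.
have := proper_tree_card_le2 ex_irr tree j1 pr; have := subset_leq_card sSVT.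
by rewrite cardS; lia.
Qed.

Lemma ex_not_px3_le2 : 2 * 2 ^ 3 < t' -> ~ px3_le G 2.
Proof.
move=> large_t [c proper3].
pose D := [set low_v i | i in 'I_t'].
pose pattern v : {ffun 'I_3 -> 'I_2} := [ffun k => c [set full_u k; v]].
have [p] : exists p, 2 < #|[set v in D | pattern v == p]|.
  apply: pigeonhole_fiber.
  by rewrite card_ffun !card_ord (card_imset _ low_v_inj) card_ord mulnC.
case/card_geq_subset => S sSX cardS.
have SD v : v \in S -> (v \in D) && (pattern v == p) by move/(subsetP sSX); rewrite inE.
have [VT [F [tree pr sSVT]]] := proper3 S cardS.
suff : 2 * #|S| <= #|[set full_u k | k in 'I_3]| + 2.
  by rewrite cardS (card_imset _ full_u_inj) card_ord.
apply: (proper2_tree_hub_bound ex_irr ex_sym tree (leqnn 2) pr sSVT).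
- by move=> v u /SD /andP [/imsetP [i _ ->] _]; apply: adj_low_v.
move=> v1 v2 w /SD /andP [_ /eqP p1] /SD /andP [_ /eqP p2] /imsetP [k _ ->].
by have := congr1 (fun f : {ffun 'I_3 -> 'I_2} => f k) (etrans p1 (esym p2)); rewrite !ffunE.
Qed.

End Example.

Theorem corollary3p6 :
  (forall (T : finType) (e : rel T),
      simple_graph e -> connected_graph e -> chain_graph e ->
      min_degree_ge e 3 -> px3_le e 3) /\
  (forall s t : nat, 4 <= s -> 2 * 2 ^ 3 + 4 <= t ->
      px3_eq (ex_adj s t) 3).
Proof.
split.
  move=> T e simple_e _ chain_e deg3; case: (pickP (fun _ : T => true)) => [t0 _|T0].
    have [a [b [inj_a inj_b hubs]]] := chain_graph_hubs t0 simple_e chain_e deg3.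
    exact: px3_le3_of_hubs (proj2 simple_e) inj_a inj_b hubs.
  by exists (fun _ => ord0) => S cardS; have := max_card S; rewrite (eq_card0 T0) cardS.
move=> s t s4 t20.
have [s' Es] : exists s', s = s' + 3 by exists (s - 3); lia.
have [t' Et] : exists t', t = 3 + t' by exists (t - 3); lia.
subst s t; split=> [|[|[|[|j]]] //= _]; first exact: ex_px3_le3.
- exact: ex_not_px3_le1.
- exact: ex_not_px3_le1.
- by apply: ex_not_px3_le2; lia.
Qed.
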